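(* Let $t$ be a positive integer and let $M$ be a $t$-spike of order $r$. Then $r(M) = r^*(M) = r$, where $r^*$ denotes the rank function of the dual $M^*$.
   Context: For a positive integer $t$, a matroid $M$ is a $t$-spike of order $r$ (where $r\ge t$) if there is a partition $(A_1,\ldots,A_r)$ of $E(M)$ into 2-element sets (arms) such that, for every $t$-element subset $J\subseteq\{1,\dots,r\}$, the set $\bigcup_{j\in J}A_j$ is both a circuit and a cocircuit of $M$. *)

From mathcomp Require Import all_boot.
Set Implicit Arguments. Unset Strict Implicit. Unset Printing Implicit Defensive.

(* A matroid on the ground set E(M) = the whole finite type T,
   given by its independent sets. *)
Record matroid (T : finType) := Matroid {
  indep : {set T} -> bool;
  indep0 : indep set0;
  indep_sub : forall A B : {set T}, A \subset B -> indep B -> indep A;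
  indep_aug : forall A B : {set T}, indep A -> indep B -> #|A| < #|B| ->
    exists2 x, x \in B :\: A & indep (x |: A)
}.

Section MatroidDefs.
Variables (T : finType) (M : matroid T).

Definition mrank (X : {set T}) : nat :=
  \max_(Y : {set T} | (Y \subset X) && indep M Y) #|Y|.

Definition rk : nat := mrank setT.

Definition circuit (C : {set T}) : Prop :=
  ~~ indep M C /\ forall D : {set T}, D \proper C -> indep M D.

(* Dual matroid M^*: I is independent in M^* iff E - I is spanning in M,
   i.e. contains a basis of M. *)
Definition spanning (S : {set T}) : bool := mrank S == rk.
Definition dual_indep (I : {set T}) : bool := spanning (~: I).

Definition dual_mrank (X : {set T}) : nat :=
  \max_(Y : {set T} | (Y \subset X) && dual_indep Y) #|Y|.
Definition corank : nat := dual_mrank setT.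

Definition cocircuit (C : {set T}) : Prop :=
  ~~ dual_indep C /\ forall D : {set T}, D \proper C -> dual_indep D.

End MatroidDefs.

Definition is_spike_with (T : finType) (M : matroid T) (t r : nat)
    (A : 'I_r -> {set T}) : Prop :=
  [/\ 0 < t, t <= r,
      (forall i, #|A i| = 2),
      (forall i j, i != j -> [disjoint A i & A j]) &
      (\bigcup_(i < r) A i = setT)] /\
      (forall J : {set 'I_r}, #|J| = t ->
         circuit M (\bigcup_(j in J) A j) /\ cocircuit M (\bigcup_(j in J) A j)).

Definition is_spike (T : finType) (M : matroid T) (t r : nat) : Prop :=
  exists A : 'I_r -> {set T}, @is_spike_with T M t r A.

From mathcomp Require Import all_boot zify.
Set Implicit Arguments. Unset Strict Implicit. Unset Printing Implicit Defensive.

(* Write X(K) for the union of the arms indexed by K.  When |K| < t, X(K) is a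
   proper subset of a spike circuit and of a spike cocircuit, hence independent
   and coindependent.  For t - 1 <= |K| <= r - t + 1, adding an arm a to K raises
   the rank of X(K) by exactly one: by at most one, since the circuit formed by a
   and t - 1 arms of K puts one element of a in the closure of the rest; by at
   least one, since otherwise the cocircuit formed by a and t - 1 arms outside K
   would be coindependent.  So r(X(K)) = |K| + t - 1.  For |K| = r - t + 1 the
   complement of X(K) is coindependent, i.e. X(K) is spanning, and r(M) = r;
   then r*(M) = |E| - r(M) = 2r - r.  This range of |K| is nonempty because a
   circuit and a cocircuit of size 2t give 2t - 1 <= r(M) <= 2r - 2t + 1. *)

Section CardinalSubsets.
Variable I : finType.
Implicit Types K U : {set I}.

Lemma exists_subset_card U n :
  n <= #|U| -> exists2 L : {set I}, L \subset U & #|L| = n.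
Proof.
case/card_geqP=> s [uniq_s size_s sub_s]; exists [set x in s].
  by apply/subsetP=> x; rewrite inE => /sub_s.
by rewrite cardsE (card_uniqP uniq_s).
Qed.

Lemma exists_proper_superset_card K n : #|K| < n -> n <= #|I| ->
  exists2 J : {set I}, #|J| = n & K \proper J.
Proof.
move=> ltKn len.
have [L sLK cL] : exists2 L : {set I}, L \subset ~: K & #|L| = n - #|K|.
  by apply: exists_subset_card; have := cardsC K; lia.
have KL0 : K :&: L = set0.
  by apply: disjoint_setI0; rewrite disjoint_sym disjoints_subset.
exists (K :|: L); first by rewrite cardsU KL0 cards0 cL; lia.
apply: properUl; apply: contraTN ltKn => sLK'.
have : L \subset K :&: L by rewrite subsetI sLK' subxx.
by rewrite KL0 subset0 -cards_eq0 cL; lia.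
Qed.

End CardinalSubsets.

Section MatroidRank.
Variables (T : finType) (M : matroid T).
Implicit Types (C D I J X Y Z : {set T}) (e : T).

Lemma indep_leq_mrank X Y : Y \subset X -> indep M Y -> #|Y| <= mrank M X.
Proof. by move=> sYX iY; apply: (bigmax_sup Y) => //; rewrite sYX iY. Qed.

Lemma mrank_basis X :
  exists2 Y : {set T}, (Y \subset X) && indep M Y & mrank M X = #|Y|.
Proof.
rewrite /mrank (bigmax_eq_arg set0); last by rewrite sub0set indep0.
by case: arg_maxnP => [|Y ? _]; [rewrite sub0set indep0 | exists Y].
Qed.

Lemma mrank_leq_card X : mrank M X <= #|X|.
Proof. by have [Y /andP[sYX _] ->] := mrank_basis X; apply: subset_leq_card. Qed.

Lemma mrank_mono X Y : X \subset Y -> mrank M X <= mrank M Y.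
Proof.
move=> sXY; have [Z /andP[sZX iZ] ->] := mrank_basis X.
exact: indep_leq_mrank (subset_trans sZX sXY) iZ.
Qed.

Lemma indep_mrank X : indep M X -> mrank M X = #|X|.
Proof. by move=> iX; apply/eqP; rewrite eqn_leq mrank_leq_card indep_leq_mrank. Qed.

Lemma indep_card_leq_rk I : indep M I -> #|I| <= rk M.
Proof. exact: indep_leq_mrank (subsetT I). Qed.

Lemma dual_indep_card_leq I : dual_indep M I -> #|I| <= #|T| - rk M.
Proof.
move/eqP=> <-; have := mrank_leq_card (~: I); have := cardsC I; lia.
Qed.

Lemma mrank_setU1 e X : mrank M (e |: X) <= (mrank M X).+1.
Proof.
have [Y /andP[sY iY] ->] := mrank_basis (e |: X).
have sYX : Y :\ e \subset X by rewrite subDset.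
have := indep_leq_mrank sYX (indep_sub (subD1set Y e) iY).
by rewrite (cardsD1 e Y); case: (e \in Y) => /=; lia.
Qed.

Lemma indep_augment I J : indep M I -> indep M J -> #|I| <= #|J| ->
  exists B : {set T}, [/\ I \subset B, B \subset I :|: J, indep M B & #|B| = #|J|].
Proof.
move=> iI iJ leIJ; have [n cJ] : exists n, #|J| = #|I| + n by exists (#|J| - #|I|); lia.
elim: n I iI {leIJ} cJ => [|n IH] I iI cJ.
  by exists I; rewrite subxx subsetUl cJ addn0.
have /(indep_aug iI iJ)[x] : #|I| < #|J| by lia.
rewrite inE => /andP[xI xJ] ixI.
have [|B [sxIB sB iB cB]] := IH (x |: I) ixI; first by rewrite cardsU1 xI; lia.
exists B; split=> //; first exact: subset_trans (subsetUr [set x] I) sxIB.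
by apply: subset_trans sB _; rewrite -setUA subUset sub1set inE xJ orbT subxx.
Qed.

Definition in_closure e X : Prop := mrank M (e |: X) = mrank M X.

Lemma in_closure_mono e Y Z : Y \subset Z -> in_closure e Y -> in_closure e Z.
Proof.
move=> sYZ clY; apply/eqP.
rewrite eqn_leq [_ <= mrank M (e |: Z)]mrank_mono ?subsetUr // andbT leqNgt.
apply/negP=> ltZ.
have eZ : e \notin Z.
  by apply: contraL ltZ => eZ; rewrite (setUidPr _) ?sub1set // ltnn.
have [I /andP[sI iI] cI] := mrank_basis (e |: Z).
have [J /andP[sJY iJ] cJ] := mrank_basis Y.
have [|B [sJB sB iB cB]] := indep_augment iJ iI.
  by rewrite -cI -cJ (leq_trans (mrank_mono sYZ)) ?mrank_mono ?subsetUr.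
(* otherwise [B] is an independent subset of [Z] larger than [mrank M Z] *)
have eB : e \in B.
  have sBZ : B :\ e \subset Z.
    rewrite subDset (subset_trans sB) // subUset sI.
    by rewrite (subset_trans sJY) ?subsetU ?sYZ ?orbT.
  have := indep_leq_mrank sBZ (indep_sub (subD1set B e) iB).
  by move: ltZ; rewrite cI -cB (cardsD1 e B); case: (e \in B) => /=; lia.
have eJ : e \notin J by apply: contra eZ => /(subsetP sJY) /(subsetP sYZ).
have seJB : e |: J \subset B by rewrite subUset sub1set eB sJB.
have := indep_leq_mrank (setUS [set e] sJY) (indep_sub seJB iB).
by rewrite cardsU1 eJ clY cJ; lia.
Qed.

Lemma circuit_in_closure C e X :
  circuit M C -> e \in C -> C :\ e \subset X -> in_closure e X.
Proof.
move=> [depC minC] eC sCX; apply: in_closure_mono sCX _.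
have iCe := minC _ (properD1 eC).
rewrite /in_closure setD1K // (indep_mrank iCe).
apply/eqP; rewrite eqn_leq (indep_leq_mrank (subD1set C e) iCe) andbT.
have [Y /andP[sYC iY] ->] := mrank_basis C.
have : Y \proper C by rewrite properEneq sYC andbT; apply: contraNneq depC => <-.
by move/proper_card; rewrite (cardsD1 e C) eC.
Qed.

Lemma cocircuit_notin_closure D e X :
  cocircuit M D -> e \in D -> X \subset ~: D -> ~ in_closure e X.
Proof.
move=> [codepD cominD] eD sXD clX.
have := cominD _ (properD1 eD).
rewrite /dual_indep /spanning setCD setUC (in_closure_mono sXD clX) => spD.
by rewrite /dual_indep /spanning spD in codepD.
Qed.

Lemma corankE : corank M = #|T| - rk M.
Proof.
apply/eqP; rewrite eqn_leq; apply/andP; split.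
  by apply/bigmax_leqP => I /andP[_]; apply: dual_indep_card_leq.
have [B /andP[_ iB] rkB] := mrank_basis setT.
have coB : dual_indep M (~: B).
  by rewrite /dual_indep /spanning /rk setCK (indep_mrank iB) rkB.
apply: leq_trans (bigmax_sup (~: B) _ (leqnn _)); last by rewrite subsetT.
by rewrite /rk rkB -(cardsC B); lia.
Qed.

End MatroidRank.

Section Spike.
Variables (T : finType) (M : matroid T) (t r : nat) (A : 'I_r -> {set T}).
Hypothesis spikeA : is_spike_with M t A.
Implicit Types (J K L : {set 'I_r}) (x : T).

Definition arms K : {set T} := \bigcup_(j in K) A j.

Let t_gt0 : 0 < t. Proof. by case: spikeA => [[]]. Qed.
Let t_le_r : t <= r. Proof. by case: spikeA => [[]]. Qed.
Let card_arm i : #|A i| = 2. Proof. by case: spikeA => [[]]. Qed.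
Let disjoint_arms i j : i != j -> [disjoint A i & A j].
Proof. by case: spikeA => [[_ _ _ disj _] _]; apply: disj. Qed.
Let bigcup_armsT : \bigcup_(i < r) A i = setT. Proof. by case: spikeA => [[]]. Qed.
Let spike_circuit J : #|J| = t -> circuit M (arms J).
Proof. by move=> cJ; case: spikeA => _ /(_ J cJ)[]. Qed.
Let spike_cocircuit J : #|J| = t -> cocircuit M (arms J).
Proof. by move=> cJ; case: spikeA => _ /(_ J cJ)[]. Qed.

Lemma exists_arm x : exists j, x \in A j.
Proof.
have : x \in \bigcup_(i < r) A i by rewrite bigcup_armsT inE.
by case/bigcupP=> j _ xj; exists j.
Qed.

Lemma arm_nonempty j : exists e, e \in A j.
Proof. by apply/card_gt0P; rewrite card_arm. Qed.

Lemma mem_arm x i j : x \in A i -> (x \in A j) = (i == j).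
Proof.
by move=> xi; case: eqVneq => [<- // | /disjoint_arms/disjointFr]; apply.
Qed.

Lemma mem_arms x j K : x \in A j -> (x \in arms K) = (j \in K).
Proof.
move=> xj; apply/bigcupP/idP => [[i iK]|]; last by exists j.
by rewrite (mem_arm _ xj) => /eqP ->.
Qed.

Lemma arms_subset K L : (arms K \subset arms L) = (K \subset L).
Proof.
apply/subsetP/subsetP => sKL.
  move=> j jK; have [e ej] := arm_nonempty j.
  by rewrite -(mem_arms L ej); apply: sKL; rewrite (mem_arms _ ej).
by move=> x; have [j xj] := exists_arm x; rewrite !(mem_arms _ xj); apply: sKL.
Qed.

Lemma arms_proper K L : (arms K \proper arms L) = (K \proper L).
Proof. by rewrite !properE !arms_subset. Qed.

Lemma arms_setC K : ~: arms K = arms (~: K).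
Proof.
by apply/setP => x; have [j xj] := exists_arm x; rewrite !inE !(mem_arms _ xj) inE.
Qed.

Lemma arms_setD1 a K : a \in K -> arms K = A a :|: arms (K :\ a).
Proof. by move=> aK; rewrite /arms (big_setD1 a aK). Qed.

Lemma card_arms K : #|arms K| = (#|K|).*2.
Proof.
have [n] := ubnP #|K|; elim: n K => // n IH K.
case: (set_0Vmem K) => [-> _ | [a aK] ltKn].
  by rewrite /arms big_set0 !cards0.
have disj : [disjoint A a & arms (K :\ a)].
  by apply: bigcup_disjoint => j; rewrite !inE eq_sym => /andP[/disjoint_arms].
rewrite (arms_setD1 aK) cardsU (disjoint_setI0 disj) cards0 card_arm IH; last first.
  by rewrite (cardsD1 a K) aK in ltKn.
by rewrite (cardsD1 a K) aK; lia.
Qed.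

Lemma card_spike : #|T| = r.*2.
Proof.
have armsT : arms setT = setT.
  by apply/setP => x; have [j xj] := exists_arm x; rewrite (mem_arms _ xj) !inE.
by rewrite -cardsT -armsT card_arms cardsT card_ord.
Qed.

Lemma spike_order_bound : t.*2 <= r.+1.
Proof.
have [J _ cJ] : exists2 J : {set 'I_r}, J \subset setT & #|J| = t.
  by apply: exists_subset_card; rewrite cardsT card_ord.
have /card_gt0P[j jJ] : 0 < #|J| by rewrite cJ.
have [e ej] := arm_nonempty j.
have eJ : e \in arms J by rewrite (mem_arms _ ej).
have [_ minC] := spike_circuit cJ; have [_ minD] := spike_cocircuit cJ.
have := indep_card_leq_rk (minC _ (properD1 eJ)).
have := dual_indep_card_leq (minD _ (properD1 eJ)).
by have := cardsD1 e (arms J); rewrite eJ card_arms cJ card_spike; lia.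
Qed.

Lemma indep_arms K : #|K| < t -> indep M (arms K).
Proof.
move=> ltKt; have [|J cJ ltKJ] := exists_proper_superset_card ltKt.
  by rewrite card_ord.
by have [_] := spike_circuit cJ; apply; rewrite arms_proper.
Qed.

Lemma dual_indep_arms K : #|K| < t -> dual_indep M (arms K).
Proof.
move=> ltKt; have [|J cJ ltKJ] := exists_proper_superset_card ltKt.
  by rewrite card_ord.
by have [_] := spike_cocircuit cJ; apply; rewrite arms_proper.
Qed.

Lemma mrank_arms_setD1_leq a K : a \in K -> t <= #|K| ->
  mrank M (arms K) <= (mrank M (arms (K :\ a))).+1.
Proof.
move=> aK leKt.
have [L sL cL] : exists2 L : {set 'I_r}, L \subset K :\ a & #|L| = t.-1.
  by apply: exists_subset_card; rewrite (cardsD1 a K) aK in leKt; lia.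
have aL : a \notin L by apply: contraTN aK => /(subsetP sL); rewrite !inE eqxx.
have [e [f [_ Aa]]] := cards2P _ (introT eqP (card_arm a)).
have armsK : arms K = e |: (f |: arms (K :\ a)) by rewrite (arms_setD1 aK) Aa -setUA.
have circ : circuit M (arms (a |: L)).
  by apply: spike_circuit; rewrite cardsU1 aL cL; lia.
have eC : e \in arms (a |: L).
  by rewrite (mem_arms _ (_ : e \in A a)) ?setU11 // Aa !inE eqxx.
have clo : in_closure M e (f |: arms (K :\ a)).
  apply: circuit_in_closure circ eC _.
  by rewrite subDset -armsK arms_subset subUset sub1set aK (subset_trans sL) ?subD1set.
by rewrite armsK clo; apply: mrank_setU1.
Qed.

Lemma mrank_arms_setD1_gt a K : a \in K -> #|K| + t <= r.+1 ->
  mrank M (arms (K :\ a)) < mrank M (arms K).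
Proof.
move=> aK leKr.
have [L sL cL] : exists2 L : {set 'I_r}, L \subset ~: K & #|L| = t.-1.
  by apply: exists_subset_card; have := cardsC K; rewrite card_ord; lia.
have aL : a \notin L by apply: contraTN aK => /(subsetP sL); rewrite inE.
have cocirc : cocircuit M (arms (a |: L)).
  by apply: spike_cocircuit; rewrite cardsU1 aL cL; lia.
have [e ea] := arm_nonempty a.
have eD : e \in arms (a |: L) by rewrite (mem_arms _ ea) setU11.
have sKD : arms (K :\ a) \subset ~: arms (a |: L).
  rewrite arms_setC arms_subset; apply/subsetP => j; rewrite !inE => /andP[ja jK].
  by rewrite (negPf ja); apply: contraL jK => /(subsetP sL); rewrite inE.
rewrite ltnNge; apply/negP => leK.
apply: (cocircuit_notin_closure cocirc eD sKD).
apply/eqP; rewrite eqn_leq [_ <= mrank M (e |: _)]mrank_mono ?subsetUr // andbT.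
apply: leq_trans leK; apply: mrank_mono.
by rewrite subUset sub1set (mem_arms _ ea) aK arms_subset subD1set.
Qed.

Lemma mrank_arms K : t.-1 <= #|K| -> #|K| + t <= r.+1 ->
  mrank M (arms K) = #|K| + t.-1.
Proof.
move=> leK; have [n cK] : exists n, #|K| = t.-1 + n by exists (#|K| - t.-1); lia.
elim: n K {leK} cK => [|n IH] K cK leKr.
  have iK : indep M (arms K) by apply: indep_arms; lia.
  by rewrite indep_mrank // card_arms cK; lia.
have /card_gt0P[a aK] : 0 < #|K| by lia.
have cKa : #|K :\ a| = t.-1 + n by rewrite (cardsD1 a K) aK in cK; lia.
have rKa : mrank M (arms (K :\ a)) = #|K :\ a| + t.-1 by apply: IH => //; lia.
have := mrank_arms_setD1_leq aK; have := mrank_arms_setD1_gt aK leKr.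
by rewrite rKa cKa cK; lia.
Qed.

Lemma rk_spike : rk M = r.
Proof.
have [K _ cK] : exists2 K : {set 'I_r}, K \subset setT & #|K| = r - t.-1.
  by apply: exists_subset_card; rewrite cardsT card_ord; lia.
have /eqP <- : dual_indep M (arms (~: K)).
  by apply: dual_indep_arms; have := cardsC K; rewrite card_ord; lia.
have bound := spike_order_bound.
by rewrite -arms_setC setCK mrank_arms cK; lia.
Qed.

Lemma corank_spike : corank M = r.
Proof. by rewrite corankE rk_spike card_spike; lia. Qed.

End Spike.

Theorem lemma6p2 (T : finType) (M : matroid T) (t r : nat) :
  0 < t -> is_spike M t r -> rk M = r /\ corank M = r.
Proof. by move=> _ [A spikeA]; rewrite (rk_spike spikeA) (corank_spike spikeA). Qed.
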